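(* Let $f:\mathcal X^n\to\mathcal T$ with $\mathcal T$ finite, $\varepsilon>0$, and $L_{0,1}(s,t)=\mathbf 1\{s\ne t\}$. Let $M$ be the discrete inverse sensitivity mechanism run with privacy parameter $4\varepsilon$. Then $M$ is $4\varepsilon$-differentially private, and for every $\varepsilon$-differentially private $L_{0,1}$-unbiased mechanism $M_{\mathrm{unb}}$ and every $x\in\mathcal X^n$, $$\mathbb E[L_{0,1}(M(x),f(x))]\le \mathbb E[L_{0,1}(M_{\mathrm{unb}}(x),f(x))].$$ That is, the inverse sensitivity mechanism is $4$-optimal against $L_{0,1}$-unbiased mechanisms.
   Context: $d_H$ is the Hamming distance on $\mathcal X^n$; $x,x'$ are neighboring if $d_H(x,x')\le1$. A mechanism $M$ is $\varepsilon$-differentially private if $\mathbb P(M(x)\in S)\le e^\varepsilon\mathbb P(M(x')\in S)$ for all neighboring $x,x'$ and measurable $S$. A mechanism $M$ is $L$-unbiased if $\mathbb E[L(M(x),f(x))]\le\mathbb E[L(M(x),t)]$ for all $x\in\mathcal X^n$, $t\in\mathcal T$. The inverse sensitivity is $\mathrm{len}_f(x;t)=\inf\{d_H(x,x'):f(x')=t\}$ ($\inf\emptyset=+\infty$, $e^{-\infty}=0$), and the discrete inverse sensitivity mechanism with parameter $\varepsilon'$ outputs $t$ with probability $e^{-\mathrm{len}_f(x;t)\varepsilon'/2}\big/\sum_{s\in\mathcal T}e^{-\mathrm{len}_f(x;s)\varepsilon'/2}$. *)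

From HB Require Import structures.
From mathcomp Require Import all_boot all_order all_algebra.
From mathcomp Require Import all_classical all_reals all_analysis.
Set Implicit Arguments. Unset Strict Implicit. Unset Printing Implicit Defensive.
Import Order.TTheory GRing.Theory Num.Theory.
Local Open Scope ring_scope.

Definition hamming (X : eqType) (n : nat) (x x' : n.-tuple X) : nat :=
  #|[set i : 'I_n | tnth x i != tnth x' i]|.

(* A mechanism with (finite) output space T: for each dataset, a
   probability mass function on T (T carries the discrete sigma-algebra). *)
Definition mechanism (R : realType) (X : eqType) (n : nat) (T : finType) :=
  n.-tuple X -> T -> R.

Definition is_mechanism (R : realType) (X : eqType) (n : nat) (T : finType)
  (M : mechanism R X n T) : Prop :=
  forall x, (forall t, 0 <= M x t) /\ \sum_(t : T) M x t = 1.

Definition prob (R : realType) (X : eqType) (n : nat) (T : finType)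
  (M : mechanism R X n T) (x : n.-tuple X) (S : {set T}) : R :=
  \sum_(t in S) M x t.

Definition diff_private (R : realType) (X : eqType) (n : nat) (T : finType)
  (eps : R) (M : mechanism R X n T) : Prop :=
  forall x x' : n.-tuple X, (hamming x x' <= 1)%N ->
    forall S : {set T}, prob M x S <= expR eps * prob M x' S.

Definition exp_loss (R : realType) (X : eqType) (n : nat) (T : finType)
  (L : T -> T -> R) (M : mechanism R X n T) (x : n.-tuple X) (t : T) : R :=
  \sum_(s : T) M x s * L s t.

Definition unbiased (R : realType) (X : eqType) (n : nat) (T : finType)
  (L : T -> T -> R) (f : n.-tuple X -> T) (M : mechanism R X n T) : Prop :=
  forall (x : n.-tuple X) (t : T), exp_loss L M x (f x) <= exp_loss L M x t.

Definition L01 (R : realType) (T : finType) (s t : T) : R := (s != t)%:R.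

(* inverse sensitivity len_f(x;t) = inf {d_H(x,x') : f x' = t}, in \bar R
   (inf of the empty set is +oo) *)
Definition inv_sens (R : realType) (X : eqType) (n : nat) (T : finType)
  (f : n.-tuple X -> T) (x : n.-tuple X) (t : T) : \bar R :=
  ereal_inf [set ((hamming x x')%:R)%:E | x' in [set x' | f x' = t]].

(* unnormalized weight exp(-len_f(x;t) * eps'/2), with exp(-oo) = 0 *)
Definition inv_sens_weight (R : realType) (X : eqType) (n : nat) (T : finType)
  (f : n.-tuple X -> T) (eps' : R) (x : n.-tuple X) (t : T) : R :=
  fine (expeR (- (@inv_sens R X n T f x t * (eps' / 2)%:E))%E).

Definition inv_sens_mech (R : realType) (X : eqType) (n : nat) (T : finType)
  (f : n.-tuple X -> T) (eps' : R) : mechanism R X n T :=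
  fun x t => inv_sens_weight f eps' x t / \sum_(s : T) inv_sens_weight f eps' x s.

From HB Require Import structures.
From mathcomp Require Import all_boot all_order all_algebra.
From mathcomp Require Import all_classical all_reals all_analysis.
From mathcomp Require Import lra.
Import Order.TTheory GRing.Theory Num.Theory.
Set Implicit Arguments. Unset Strict Implicit.
Local Open Scope ring_scope.

(* Write w_e(x,t) = exp(-len_f(x;t) e/2) and Z_e(x) = sum_t w_e(x,t), so that
   the inverse sensitivity mechanism outputs t with probability w_e(x,t)/Z_e(x).
   - Since len_f(.;t) is 1-Lipschitz for the Hamming distance, w_e(x,t) and
     Z_e(x) change by at most a factor exp(e/2) between neighbours; hence the
     mechanism is e-differentially private for every e > 0.
   - For the 0-1 loss, unbiasedness means that f(x) is a mode of M_unb(x).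
     If x0 is a nearest point to x with f(x0) = t, at distance k, then group
     privacy and unbiasedness at x0 give
       M_unb(x)(f x) <= e^{k eps} M_unb(x0)(f x) <= e^{k eps} M_unb(x0)(t)
                     <= e^{2 k eps} M_unb(x)(t),
     i.e. w_{4 eps}(x,t) M_unb(x)(f x) <= M_unb(x)(t).  Summing over t gives
     Z_{4 eps}(x) M_unb(x)(f x) <= 1, i.e. M_unb(x)(f x) <= M(x)(f x) since
     w(x, f x) = 1; for probability vectors the 0-1 loss is 1 - P(output = f x). *)

Section Hamming.
Variables (X : eqType) (n : nat).
Implicit Types x y z : n.-tuple X.

Lemma hamming_sym x y : hamming x y = hamming y x.
Proof. by apply: eq_card => i; rewrite !inE eq_sym. Qed.

Lemma hamming_xx x : hamming x x = 0%N.
Proof. by apply/eqP; rewrite cards_eq0; apply/eqP/setP => i; rewrite !inE eqxx. Qed.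

Lemma hamming_triangle x y z : (hamming x z <= hamming x y + hamming y z)%N.
Proof.
apply: leq_trans (leq_card_setU _ _); apply: subset_leq_card.
by apply/fintype.subsetP => i; rewrite !inE; case: (tnth x i =P tnth y i) => [->|].
Qed.

Lemma hamming_eq0 x y : hamming x y = 0%N -> x = y.
Proof.
move/eqP; rewrite cards_eq0 => /eqP diff0; apply: eq_from_tnth => i.
by apply/eqP/negPn/negP => xy; have := finset.in_set0 i; rewrite -diff0 inE xy.
Qed.

(* A path of neighbouring datasets: changing one differing coordinate of x
   into that of y brings x one step closer to y. *)
Lemma hamming_step x y k : hamming x y = k.+1 ->
  exists z, (hamming x z <= 1)%N /\ hamming z y = k.
Proof.
move=> dxy; have : [set i : 'I_n | tnth x i != tnth y i] != finset.set0.
  by rewrite -cards_eq0 -/(hamming x y) dxy.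
case/set0Pn => i; rewrite inE => xyi.
pose z := [tuple (if j == i then tnth y j else tnth x j) | j < n].
exists z; split.
  rewrite /hamming -(cards1 i); apply: subset_leq_card; apply/fintype.subsetP => j.
  by rewrite !inE tnth_mktuple; case: (j =P i) => // _; rewrite eqxx.
have -> : hamming z y = #|[set j : 'I_n | tnth x j != tnth y j] :\ i|.
  apply: eq_card => j; rewrite !inE tnth_mktuple.
  by case: (j =P i) => [->|]; rewrite ?eqxx.
by move: dxy; rewrite /hamming (cardsD1 i) inE xyi; case.
Qed.

End Hamming.

Section MechanismFacts.
Variables (R : realType) (X : eqType) (n : nat) (T : finType).
Implicit Types (x y : n.-tuple X) (M : mechanism R X n T).

Lemma group_privacy (eps : R) M : diff_private eps M ->
  forall k x y t, hamming x y = k -> M x t <= expR (k%:R * eps) * M y t.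
Proof.
move=> dpM; elim=> [|k IHk] x y t dxy.
  by rewrite (hamming_eq0 dxy) mul0r expR0 mul1r.
have [z [dxz dzy]] := hamming_step dxy.
have step : M x t <= expR eps * M z t.
  by have := dpM x z dxz [set t]; rewrite /prob !big_set1.
rewrite -natr1 mulrDl mul1r addrC expRD -mulrA.
by apply: (le_trans step); rewrite ler_wpM2l ?expR_ge0 ?IHk.
Qed.

Lemma exp_loss01 M x t : is_mechanism M ->
  exp_loss (@L01 R T) M x t = 1 - M x t.
Proof.
case/(_ x) => _ sum1; rewrite -sum1 /exp_loss /L01 (bigD1 t) //= eqxx mulr0 add0r.
rewrite [in RHS](bigD1 t) //= addrAC subrr add0r.
by apply: eq_bigr => s st; rewrite st mulr1.
Qed.

Lemma unbiased01_mode (f : n.-tuple X -> T) M :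
  is_mechanism M -> unbiased (@L01 R T) f M -> forall x t, M x t <= M x (f x).
Proof. by move=> mechM unbM x t; have := unbM x t; rewrite !exp_loss01 // lerD2l lerN2. Qed.

End MechanismFacts.

Section InverseSensitivity.
Variables (R : realType) (X : eqType) (n : nat) (T : finType).
Variables (f : n.-tuple X -> T) (e : R).
Hypothesis e_gt0 : 0 < e.
Implicit Types x y : n.-tuple X.

Local Notation w := (inv_sens_weight f e).
Local Notation Z x := (\sum_(s : T) w x s).

Variant weight_spec x t : R -> Prop :=
| WeightUnattained of (forall x', f x' != t) : weight_spec x t 0
| WeightNearest x0 of f x0 = t
    & (forall x', f x' = t -> (hamming x x0 <= hamming x x')%N) :
    weight_spec x t (expR (- ((hamming x x0)%:R * (e / 2)))).

Lemma weightP x t : weight_spec x t (w x t).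
Proof.
rewrite /inv_sens_weight /inv_sens.
have [[x' fx'] | unatt] := pselect (exists x', f x' = t); last first.
  have -> : [set x' | f x' = t]%classic = set0.
    by apply/seteqP; split => // y /= fy; apply: unatt; exists y.
  rewrite image_set0 ereal_inf0 mulyr gtr0_sg ?divr_gt0 // mul1e /=.
  by constructor => y; apply/eqP => fy; apply: unatt; exists y.
pose at_dist k := `[< exists x0, f x0 = t /\ hamming x x0 = k >].
have [|k /asboolP [x0 [fx0 dx0]] kmin] := ex_minnP (P := at_dist).
  by exists (hamming x x'); apply/asboolP; exists x'.
have nearest x1 : f x1 = t -> (hamming x x0 <= hamming x x1)%N.
  by move=> fx1; rewrite dx0; apply: kmin; apply/asboolP; exists x1.
have -> : ereal_inf [set ((hamming x x1)%:R)%:E | x1 in [set x1 | f x1 = t]]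
          = ((hamming x x0)%:R)%:E :> \bar R.
  apply/le_anti/andP; split; first by apply: ereal_inf_lbound; exists x0.
  by apply/ereal_infP => _ [x1 /= fx1 <-]; rewrite lee_fin ler_nat nearest.
by rewrite -EFinM -EFinN /=; constructor.
Qed.

Lemma weight_ge0 x t : 0 <= w x t.
Proof. by case: weightP => *; rewrite ?expR_ge0. Qed.

Lemma weight_at_value x : w x (f x) = 1.
Proof.
case: weightP => [/(_ x)|x0 _ nearest]; first by rewrite eqxx.
by have := nearest x erefl; rewrite hamming_xx leqn0 => /eqP ->; rewrite mul0r oppr0 expR0.
Qed.

(* Inverse sensitivity is 1-Lipschitz, so weights of neighbours differ by
   at most a factor exp(e/2). *)
Lemma weight_neighbour x y t : (hamming x y <= 1)%N -> w x t <= expR (e / 2) * w y t.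
Proof.
move=> dxy; case: (weightP x t) => [_|x0 fx0 _]; first by rewrite mulr_ge0 ?expR_ge0 ?weight_ge0.
case: (weightP y t) => [/(_ x0)|x1 _ near1]; first by rewrite fx0 eqxx.
rewrite -expRD ler_expR.
have : (hamming y x1 <= 1 + hamming x x0)%N.
  apply: leq_trans (near1 _ fx0) _; apply: leq_trans (hamming_triangle y x x0) _.
  by rewrite leq_add2r hamming_sym.
rewrite -(ler_nat R) natrD; have : 0 < e / 2 by rewrite divr_gt0.
by move: (e / 2) => c; nra.
Qed.

Lemma normaliser_ge1 x : 1 <= Z x.
Proof.
rewrite (bigD1 (f x)) //= weight_at_value lerDl.
by apply: sumr_ge0 => s _; apply: weight_ge0.
Qed.

Lemma normaliser_gt0 x : 0 < Z x.
Proof. exact: lt_le_trans (normaliser_ge1 x). Qed.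

Lemma inv_sens_mech_is_mechanism : is_mechanism (inv_sens_mech f e).
Proof.
move=> x; split=> [t|]; first by rewrite divr_ge0 ?weight_ge0 ?ltW ?normaliser_gt0.
by rewrite /inv_sens_mech -mulr_suml divff // gt_eqF ?normaliser_gt0.
Qed.

Lemma inv_sens_mech_at_value x : inv_sens_mech f e x (f x) = (Z x)^-1.
Proof. by rewrite /inv_sens_mech weight_at_value mul1r. Qed.

(* Privacy: numerator and normaliser each contribute a factor exp(e/2). *)
Lemma inv_sens_mech_private : diff_private e (inv_sens_mech f e).
Proof.
move=> x y dxy S; rewrite /prob mulr_sumr; apply: ler_sum => t _.
set c := expR (e / 2).
have expR_split : expR e = c * c by rewrite -expRD -splitr.
have Znb : Z y <= c * Z x.
  rewrite mulr_sumr; apply: ler_sum => s _.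
  by apply: weight_neighbour; rewrite hamming_sym.
have invZ : (Z x)^-1 <= c * (Z y)^-1.
  by rewrite ler_pdivlMr ?normaliser_gt0 // mulrC ler_pdivrMr ?normaliser_gt0.
rewrite /inv_sens_mech expR_split mulrA -(mulrA c c) (mulrC c (w y t)) !mulrA -mulrA.
apply: ler_pM invZ; first exact: weight_ge0.
  by rewrite invr_ge0 ltW ?normaliser_gt0.
exact: weight_neighbour.
Qed.

End InverseSensitivity.

(* Key pointwise bound: for an eps-private mechanism M that is unbiased for the
   0-1 loss, w_{4 eps}(x,t) M(x)(f x) <= M(x)(t); it goes through a nearest
   preimage x0 of t by group privacy, the mode property at x0, and group
   privacy back. *)
Lemma unbiased_weight_bound (R : realType) (X : eqType) (n : nat) (T : finType)
    (f : n.-tuple X -> T) (eps : R) (M : mechanism R X n T) :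
    0 < eps -> is_mechanism M -> diff_private eps M -> unbiased (@L01 R T) f M ->
  forall x t, inv_sens_weight f (4 * eps) x t * M x (f x) <= M x t.
Proof.
move=> eps_gt0 mechM dpM unbM x t.
have M_ge0 y s : 0 <= M y s by case: (mechM y) => ge0 _; apply: ge0.
have e4_gt0 : 0 < 4 * eps by rewrite mulr_gt0.
case: (weightP f e4_gt0 x t) => [_|x0 fx0 _]; first by rewrite mul0r M_ge0.
set k := hamming x x0.
have to_x0 : M x (f x) <= expR (k%:R * eps) * M x0 (f x) by apply: group_privacy.
have mode : M x0 (f x) <= M x0 t by rewrite -fx0 (unbiased01_mode mechM unbM).
have from_x0 : M x0 t <= expR (k%:R * eps) * M x t.
  by apply: group_privacy; rewrite // hamming_sym.
have chain : M x (f x) <= expR (k%:R * eps + k%:R * eps) * M x t.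
  rewrite expRD -mulrA; apply: (le_trans to_x0); rewrite ler_wpM2l ?expR_ge0 //.
  exact: le_trans mode from_x0.
have -> : k%:R * (4 * eps / 2) = k%:R * eps + k%:R * eps by lra.
by rewrite expRN mulrC ler_pdivrMr ?expR_gt0 // mulrC; exact: chain.
Qed.

Theorem corollary3p1 (R : realType) (X : eqType) (n : nat) (T : finType)
  (f : n.-tuple X -> T) (eps : R) (heps : 0 < eps) :
  diff_private (4 * eps) (inv_sens_mech f (4 * eps)) /\
  forall Munb : mechanism R X n T,
    is_mechanism Munb ->
    diff_private eps Munb ->
    unbiased (@L01 R T) f Munb ->
    forall x : n.-tuple X,
      exp_loss (@L01 R T) (inv_sens_mech f (4 * eps)) x (f x)
      <= exp_loss (@L01 R T) Munb x (f x).
Proof.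
have e_gt0 : 0 < 4 * eps by rewrite mulr_gt0.
split; first exact: inv_sens_mech_private.
move=> Munb mechM dpM unbM x.
rewrite (exp_loss01 _ _ mechM) (exp_loss01 _ _ (inv_sens_mech_is_mechanism f e_gt0)).
rewrite lerD2l lerN2 inv_sens_mech_at_value //.
rewrite -[leRHS]mulr1 ler_pdivlMl ?normaliser_gt0 // mulr_suml.
have [_ sum1] := mechM x; rewrite -[leRHS]sum1.
apply: ler_sum => t _; exact: (unbiased_weight_bound heps mechM dpM unbM).
Qed.
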